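(* Let $t$ be a positive integer and let $M$ be a matroid with the $(t,2t)$-property. If $M$ has a $t$-echidna $(S_1,\ldots, S_n)$ with $n\geq3t-1$, then $(S_1,\ldots, S_n)$ is also a $t$-coechidna of $M$.
   Context: A matroid $M$ has the $(t,2t)$-property if every $t$-element subset of $E(M)$ is contained in both a $2t$-element circuit and a $2t$-element cocircuit of $M$. A $t$-echidna of order $n$ of $M$ is a partition $(S_1,\ldots,S_n)$ of a subset of $E(M)$ such that $|S_i|=2$ for all $i\in\{1,\dots,n\}$, and $\bigcup_{i\in I}S_i$ is a circuit of $M$ for every $I\subseteq\{1,\dots,n\}$ with $|I|=t$. A $t$-coechidna of $M$ is a $t$-echidna of the dual matroid $M^*$ (i.e. the unions of any $t$ of the $S_i$ are cocircuits of $M$). *)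

From mathcomp Require Import all_boot.
Set Implicit Arguments. Unset Strict Implicit. Unset Printing Implicit Defensive.

Record matroid (T : finType) := Matroid {
  indep : {set T} -> bool;
  indep0 : indep set0;
  indep_sub : forall A B : {set T}, B \subset A -> indep A -> indep B;
  indep_aug : forall A B : {set T}, indep A -> indep B -> #|A| < #|B| ->
     exists2 x, x \in B :\: A & indep (x |: A)
}.

Section Defs.
Variable T : finType.

Definition circuit_of (ind : {set T} -> bool) (C : {set T}) : Prop :=
  ~~ ind C /\ forall D : {set T}, D \proper C -> ind D.

Variable M : matroid T.

Definition is_basis (B : {set T}) : bool :=
  indep M B && [forall A : {set T}, (B \subset A) && indep M A ==> (A == B)].

(* independent sets of the dual matroid M^*: sets disjoint from some basis *)
Definition dual_indep (A : {set T}) : bool :=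
  [exists B : {set T}, is_basis B && [disjoint A & B]].

Definition circuit (C : {set T}) : Prop := circuit_of (indep M) C.
Definition cocircuit (C : {set T}) : Prop := circuit_of dual_indep C.

Definition t2t_property (t : nat) : Prop :=
  forall X : {set T}, #|X| = t ->
    (exists C, [/\ circuit C, X \subset C & #|C| = 2 * t]) /\
    (exists D, [/\ cocircuit D, X \subset D & #|D| = 2 * t]).

Definition pair_partition (n : nat) (S : 'I_n -> {set T}) : Prop :=
  (forall i, #|S i| = 2) /\ (forall i j, i != j -> [disjoint S i & S j]).

Definition echidna (t n : nat) (S : 'I_n -> {set T}) : Prop :=
  pair_partition S /\
  forall I : {set 'I_n}, #|I| = t -> circuit (\bigcup_(i in I) S i).

Definition coechidna (t n : nat) (S : 'I_n -> {set T}) : Prop :=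
  pair_partition S /\
  forall I : {set 'I_n}, #|I| = t -> cocircuit (\bigcup_(i in I) S i).

End Defs.

From mathcomp Require Import all_boot zify.

(* Given t blocks of the echidna, the (t,2t)-property puts one element from
   each of them in a cocircuit D of size 2t.  Every block meets D in 0 or 2
   elements: if S_j met D in a single element then, since at most |D| = 2t
   blocks meet D and n >= 3t - 1, some t - 1 blocks avoid D, and their union
   with S_j is a circuit meeting the cocircuit D in exactly one element, which
   is impossible in a matroid.  So the t chosen blocks lie in D, and their
   union, of size 2t, is D itself. *)

Set Implicit Arguments. Unset Strict Implicit. Unset Printing Implicit Defensive.

Section MatroidFacts.
Variables (T : finType) (M : matroid T).

Lemma indep_card_basis (A B : {set T}) :
  indep M A -> is_basis M B -> #|B| <= #|A| -> is_basis M A.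
Proof.
move=> iA /andP[iB /forallP maxB] leBA; rewrite /is_basis iA /=.
apply/forallP=> A'; apply/implyP=> /andP[sAA' iA']; apply: contraT => neA'A.
have ltAA' : #|A| < #|A'| by apply: proper_card; rewrite properEneq eq_sym neA'A.
have [x /setDP[xA' xB] ixB] := indep_aug iB iA' (leq_ltn_trans leBA ltAA').
move: (maxB (x |: B)); rewrite subsetUr ixB => /eqP eB.
by rewrite -eB setU11 in xB.
Qed.

Lemma indep_extend_within (A U B : {set T}) :
    A \subset U -> indep M A -> is_basis M B ->
  exists2 A' : {set T}, [&& A \subset A', A' \subset U & indep M A'] &
    is_basis M A' \/ exists2 x, x \in B :\: U & indep M (x |: A').
Proof.
move=> sAU iA bB.
pose P (X : {set T}) := [&& A \subset X, X \subset U & indep M X].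
have PA : P A by rewrite /P subxx sAU iA.
have [A' PA' maxA'] := @arg_maxnP _ A P (fun X : {set T} => #|X|) PA.
exists A' => //; case/and3P: PA' => sAA' sA'U iA'.
have [ltA'B | leBA'] := ltnP #|A'| #|B|; last first.
  by left; exact: indep_card_basis bB _.
have [x /setDP[xB xA'] ixA'] := indep_aug iA' (andP bB).1 ltA'B.
right; exists x => //; rewrite inE xB andbT; apply: contraT => /negPn xU.
have := maxA' (x |: A'); rewrite /P ixA' subUset sub1set xU sA'U.
rewrite (subset_trans sAA' (subsetUr _ _)) cardsU1 xA' => /(_ isT) /=.
by rewrite add1n ltnn.
Qed.

Lemma circuit_cocircuit_meet_neq1 (C D : {set T}) :
  circuit M C -> cocircuit M D -> #|C :&: D| != 1.
Proof.
move=> [depC minC] [codepD minD]; apply/cards1P => -[e CDe].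
have /setIP[eC eD] : e \in C :&: D by rewrite CDe set11.
have /existsP[B /andP[bB disB]] : dual_indep M (D :\ e).
  by apply: minD; rewrite properD1.
have sCD : C :\ e \subset ~: D.
  apply/subsetP => x /setD1P[xe xC]; rewrite inE; apply: contra xe => xD.
  by rewrite -in_set1 -CDe inE xC.
(* Extend C - e to an independent set avoiding D.  It is not a basis, as every
   basis meets the cocircuit D; so it is augmented from B, which avoids D - e,
   and only by e, which would make C independent. *)
have [A' /and3P[sCA' sA'D _]] :=
  indep_extend_within sCD (minC _ (properD1 eC)) bB.
case=> [bA' | [x /setDP[xB]]].
  apply: (negP codepD); apply/existsP; exists A'.
  by rewrite bA' disjoint_sym disjoints_subset.
rewrite inE negbK => xD; have -> : x = e.
  by apply: contraTeq xB => xe; rewrite (disjointFr disB) // in_setD1 xe.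
move=> ieA'; apply: (negP depC); apply: indep_sub ieA'.
by rewrite -(setD1K eC) setUS.
Qed.

End MatroidFacts.

Lemma card_bigcup_disjoint (I T : finType) (F : I -> {set T}) (J : {pred I}) :
    (forall i j, i != j -> [disjoint F i & F j]) ->
  #|\bigcup_(i in J) F i| = \sum_(i in J) #|F i|.
Proof.
move=> disjF; pose G i := if i \in J then F i else set0.
have disjG i j : i != j -> [disjoint G i & G j].
  move=> ij; rewrite -setI_eq0 /G.
  by case: ifP; case: ifP; rewrite ?setI0 ?set0I // => _ _; rewrite setI_eq0 disjF.
rewrite big_mkcond -/G -sum1_card partition_disjoint_bigcup // [RHS]big_mkcond.
by apply: eq_bigr => i _; rewrite sum1_card /G; case: ifP; rewrite ?cards0.
Qed.

Section DisjointFamilies.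
Variables (I T : finType) (F : I -> {set T}).
Hypothesis disjF : forall i j, i != j -> [disjoint F i & F j].

Lemma card_blocks_meeting_leq (D : {set T}) :
  #|~: [set i | [disjoint F i & D]]| <= #|D|.
Proof.
set J := ~: _; rewrite -sum1_card.
have disjFD i j : i != j -> [disjoint F i :&: D & F j :&: D].
  move=> /disjF ij.
  by rewrite (disjointWl (subsetIl _ _)) // (disjointWr (subsetIl _ _)).
apply: leq_trans (_ : \sum_(i in J) #|F i :&: D| <= _).
  by apply: leq_sum => i; rewrite !inE card_gt0 setI_eq0.
rewrite -card_bigcup_disjoint //; apply: subset_leq_card.
by apply/bigcupsP => i _; exact: subsetIr.
Qed.

Lemma disjoint_family_transversal :
    (forall i, F i != set0) ->
  exists2 f : I -> T, injective f & forall i, f i \in F i.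
Proof.
move=> F0; have /fin_all_exists[f fF] i : exists x, x \in F i by apply/set0Pn.
exists f => // i j fij; apply: contraTeq (fF j) => /disjF dij.
by rewrite (disjointFr dij) // -fij.
Qed.

End DisjointFamilies.

Lemma pair_partition_card_bigcup (T : finType) (n : nat) (S : 'I_n -> {set T})
    (I : {set 'I_n}) :
  pair_partition S -> #|\bigcup_(i in I) S i| = 2 * #|I|.
Proof.
case=> card2 disjS; rewrite card_bigcup_disjoint //.
by rewrite (eq_bigr (fun=> 2)) // sum_nat_const mulnC.
Qed.

Section EchidnaMeetsCocircuit.
Variables (T : finType) (M : matroid T) (t n : nat) (S : 'I_n -> {set T}).
Hypotheses (t_gt0 : 0 < t) (echS : echidna M t S).

Lemma echidna_cocircuit_meet_neq1 (D : {set T}) (j : 'I_n) :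
  cocircuit M D -> #|D| + t.-1 <= n -> #|S j :&: D| != 1.
Proof.
move=> codD leDn; apply/negP => SjD1; case: echS => [[_ disjS] circS].
set Z := [set k | [disjoint S k & D]].
have jZ : j \notin Z by rewrite inE -setI_eq0 -cards_eq0 (eqP SjD1).
have leZ : t.-1 <= #|Z|.
  have := cardsC Z; have := card_blocks_meeting_leq disjS D.
  by rewrite card_ord -/Z; lia.
have /card_gt0P[Z'] : 0 < #|[set A : {set 'I_n} | A \subset Z & #|A| == t.-1]|.
  by rewrite cards_draws bin_gt0.
rewrite inE => /andP[sZ'Z /eqP cardZ'].
have jZ' : j \notin Z' by apply: contra jZ; exact: (subsetP sZ'Z).
have cardJ : #|j |: Z'| = t by rewrite cardsU1 jZ' cardZ' add1n prednK.
have := circuit_cocircuit_meet_neq1 (circS _ cardJ) codD.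
have Z'D : (\bigcup_(k in Z') S k) :&: D = set0.
  apply/eqP; rewrite setI_eq0 disjoint_sym; apply: bigcup_disjoint => k.
  by move/(subsetP sZ'Z); rewrite inE disjoint_sym.
by rewrite big_setU1 //= setIUl Z'D setU0 SjD1.
Qed.

Lemma echidna_block_sub_cocircuit (D : {set T}) (j : 'I_n) (x : T) :
  cocircuit M D -> #|D| + t.-1 <= n -> x \in S j -> x \in D -> S j \subset D.
Proof.
move=> codD leDn xSj xD; have [[card2 _] _] := echS.
have meet_gt0 : 0 < #|S j :&: D| by apply/card_gt0P; exists x; rewrite inE xSj xD.
have meet_le2 : #|S j :&: D| <= 2 by rewrite -(card2 j) subset_leq_card ?subsetIl.
have /eqP meet_neq1 := echidna_cocircuit_meet_neq1 j codD leDn.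
by apply/setIidPl/eqP; rewrite eqEcard subsetIl card2; lia.
Qed.

End EchidnaMeetsCocircuit.

Theorem lemma4p3 (T : finType) (M : matroid T) (t n : nat)
    (S : 'I_n -> {set T}) :
  0 < t -> t2t_property M t -> echidna M t S -> 3 * t - 1 <= n ->
  coechidna M t S.
Proof.
move=> t_gt0 t2t echS le_n; have [pairS _] := echS; split=> // I cardI.
have [f injf fS] : exists2 f : 'I_n -> T, injective f & forall i, f i \in S i.
  case: pairS => card2 /disjoint_family_transversal; apply=> i.
  by rewrite -card_gt0 card2.
have [_ [D [codD sfD cardD]]] := t2t (f @: I) (etrans (card_imset _ injf) cardI).
have leDn : #|D| + t.-1 <= n by rewrite cardD; lia.
have sXD : \bigcup_(i in I) S i \subset D.
  apply/bigcupsP => i iI.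
  apply: (echidna_block_sub_cocircuit t_gt0 echS codD leDn (fS i)).
  by apply: (subsetP sfD); exact: imset_f.
suff -> : \bigcup_(i in I) S i = D by [].
apply/eqP; rewrite eqEcard sXD (pair_partition_card_bigcup _ pairS).
by rewrite cardD cardI leqnn.
Qed.
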